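(* Let $(X,\to,d_A)$ be a metric transition system over a finite set $A$ of actions, and let $\alpha\colon\mathit{DPMet}(\mathcal P(X))\to\mathrm{Pre}(\mathcal P(X))$ be $\alpha(d)=\{(X_1,X_2)\mid d(X_1,X_2)=0\}$. Then $\mu\,\beta_t=\alpha(\overline{\mu\,\beta_T})$, where $\mu\,\beta_t$ is the least fixpoint of $\beta_t$ in $(\mathit{Eq}(\mathcal P(X)),\supseteq)$, $\mu\,\beta_T$ is the least fixpoint of $\beta_T$ in $(\mathit{DPMet}(\mathcal P(X)),\le)$, and $\overline{d}(Y_1,Y_2)=\max\{d(Y_1,Y_2),d(Y_2,Y_1)\}$ denotes symmetrization.
   Context: A metric transition system: $(X,\to,d_A)$, $\to\subseteq X\times A\times X$, $d_A$ a metric on $A$ with values in $[0,1]$. $r\oplus s=\min\{r+s,1\}$, $r\ominus s=\max\{0,r-s\}$. $\mathit{DPMet}(Y)$: directed pseudo-metrics on $Y$ ($d(y,y)=0$, $d(x,z)\le d(x,y)\oplus d(y,z)$, values in $[0,1]$), ordered pointwise; $\mathrm{Pre}(Y)$, $\mathit{Eq}(Y)$: preorders, equivalences on $Y$. Qualitative: $\Diamond_a(S)=\{x\mid\exists x'\in S\colon x\xrightarrow{a}x'\}$; $\alpha_t(\mathcal S)=\{(X_1,X_2)\mid\forall S\in\mathcal S\colon(X_1\cap S\neq\emptyset\iff X_2\cap S\neq\emptyset)\}$, $\gamma_t(R)=\{S\subseteq X\mid\forall(X_1,X_2)\in R\colon(X_1\cap S\neq\emptyset\iff X_2\cap S\neq\emptyset)\}$,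 $\mathit{lo}_t(\mathcal S)=\bigcup_{a}\{\Diamond_a(S)\mid S\in\mathcal S\}\cup\{X\}$, $\beta_t=\alpha_t\circ\mathit{lo}_t\circ\gamma_t$. Quantitative: $\bigcirc_af(x)=\bigvee\{(1-d_A(b,a))\land f(x')\mid x\xrightarrow{b}x'\}$, $\tilde f(Y)=\bigvee_{x\in Y}f(x)$, $\alpha_T(\mathcal F)(X_1,X_2)=\bigvee_{f\in\mathcal F}(\tilde f(X_1)\ominus\tilde f(X_2))$, $\gamma_T(d)=\{f\mid\forall X_1,X_2\colon\tilde f(X_1)\ominus\tilde f(X_2)\le d(X_1,X_2)\}$, $\mathit{lo}_T(\mathcal F)=\bigcup_a\{\bigcirc_af\mid f\in\mathrm{cl}^{\mathrm{sh}}(\mathcal F)\}\cup\{1\}$ with $\mathrm{cl}^{\mathrm{sh}}$ the closure under constant shifts $f\mapsto f\ominus c$, $f\mapsto f\oplus c$, and $\beta_T=\alpha_T\circ\mathit{lo}_T\circ\gamma_T$. *)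

(* reals are an arbitrary R : realType, sets are
   classical_sets' [set T], suprema are [sup] (with [sup set0 = 0]). *)
From HB Require Import structures.
From mathcomp Require Import all_boot all_order all_algebra.
From mathcomp Require Import classical_sets reals.
Set Implicit Arguments. Unset Strict Implicit. Unset Printing Implicit Defensive.
Import Order.TTheory GRing.Theory Num.Theory.
Local Open Scope classical_set_scope.
Local Open Scope ring_scope.

Section MTS.
Variables (R : realType) (A : finType) (X : Type).
Variables (trans : X -> A -> X -> Prop) (dA : A -> A -> R).

Definition tplus (r s : R) : R := Num.min (r + s) 1.
Definition tminus (r s : R) : R := Num.max 0 (r - s).

Definition is_metric01 (d : A -> A -> R) : Prop :=
  (forall a b, 0 <= d a b <= 1) /\ (forall a b, d a b = 0 <-> a = b) /\
  (forall a b, d a b = d b a) /\ (forall a b c, d a c <= d a b + d b c).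

Definition relP := set X -> set X -> Prop.

Definition is_equiv (E : relP) : Prop :=
  (forall Y, E Y Y) /\ (forall Y1 Y2, E Y1 Y2 -> E Y2 Y1) /\
  (forall Y1 Y2 Y3, E Y1 Y2 -> E Y2 Y3 -> E Y1 Y3).

Definition is_DPMet (d : set X -> set X -> R) : Prop :=
  (forall Y1 Y2, 0 <= d Y1 Y2 <= 1) /\ (forall Y, d Y Y = 0) /\
  (forall Y1 Y2 Y3, d Y1 Y3 <= tplus (d Y1 Y2) (d Y2 Y3)).

Definition meets (Y S : set X) : Prop := exists x, Y x /\ S x.

Definition Diamond (a : A) (S : set X) : set X :=
  [set x | exists x', trans x a x' /\ S x'].

Definition alpha_t (SS : set (set X)) : relP :=
  fun X1 X2 => forall S, SS S -> (meets X1 S <-> meets X2 S).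

Definition gamma_t (Rl : relP) : set (set X) :=
  [set S | forall X1 X2, Rl X1 X2 -> (meets X1 S <-> meets X2 S)].

Definition lo_t (SS : set (set X)) : set (set X) :=
  [set S' | (exists a S, SS S /\ S' = Diamond a S) \/ S' = setT].

Definition beta_t (Rl : relP) : relP := alpha_t (lo_t (gamma_t Rl)).

(* least fixpoint of beta_t in (Eq(P(X)), ⊇): a fixpoint equivalence
   containing every fixpoint equivalence *)
Definition is_lfp_beta_t (E : relP) : Prop :=
  is_equiv E /\ beta_t E = E /\
  (forall E', is_equiv E' -> beta_t E' = E' ->
     forall Y1 Y2, E' Y1 Y2 -> E Y1 Y2).

Definition is01 (f : X -> R) : Prop := forall x, 0 <= f x <= 1.

Definition Circ (a : A) (f : X -> R) : X -> R :=
  fun x => sup [set r | exists b x', trans x b x' /\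
                                     r = Num.min (1 - dA b a) (f x')].

Definition lift (f : X -> R) (Y : set X) : R :=
  sup [set r | exists x, Y x /\ r = f x].

Definition alpha_T (FF : set (X -> R)) : set X -> set X -> R :=
  fun X1 X2 => sup [set r | exists f, FF f /\
                                      r = tminus (lift f X1) (lift f X2)].

Definition gamma_T (d : set X -> set X -> R) : set (X -> R) :=
  [set f | is01 f /\
           forall X1 X2, tminus (lift f X1) (lift f X2) <= d X1 X2].

Inductive cl_sh (FF : set (X -> R)) : (X -> R) -> Prop :=
| cl_sh_in f : FF f -> cl_sh FF f
| cl_sh_minus f c : 0 <= c <= 1 -> cl_sh FF f ->
    cl_sh FF (fun x => tminus (f x) c)
| cl_sh_plus f c : 0 <= c <= 1 -> cl_sh FF f ->
    cl_sh FF (fun x => tplus (f x) c).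

Definition lo_T (FF : set (X -> R)) : set (X -> R) :=
  [set g | (exists a f, cl_sh FF f /\ g = Circ a f) \/ g = (fun _ => 1)].

Definition beta_T (d : set X -> set X -> R) : set X -> set X -> R :=
  alpha_T (lo_T (gamma_T d)).

Definition is_lfp_beta_T (d : set X -> set X -> R) : Prop :=
  is_DPMet d /\ beta_T d = d /\
  (forall d', is_DPMet d' -> beta_T d' = d' ->
     forall Y1 Y2, d Y1 Y2 <= d' Y1 Y2).

Definition symm (d : set X -> set X -> R) : set X -> set X -> R :=
  fun Y1 Y2 => Num.max (d Y1 Y2) (d Y2 Y1).

Definition alpha0 (d : set X -> set X -> R) : relP :=
  fun X1 X2 => d X1 X2 = 0.

End MTS.

(* Let K be the kernel of the symmetrization of the least fixpoint d of
   beta_T.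

   E is contained in K: if E is a symmetric post-fixpoint of beta_t, the
   distance that is 0 on E and 1 elsewhere is a pre-fixpoint of beta_T, since
   every function that lo_T builds from functions non-expansive for it has all
   its level sets {f > t} in gamma_t E; and by Knaster-Tarski the least
   fixpoint lies below every pre-fixpoint, so d vanishes on E.  The same
   argument gives beta_t K <= K.

   K is a post-fixpoint of beta_t: for S in gamma_t K the function
   x |-> d({x}, X \ S) is non-expansive and vanishes exactly off S.  Let delta
   be the least distance d_A(b, a) with b <> a (A is finite); then ○_a of this
   function shifted by 1 - delta exceeds 1 - delta exactly on ◇_a S, so
   d(Y1, Y2) = 0 lets meeting ◇_a S pass from Y1 to Y2.

   Thus K is a fixpoint equivalence, and K is contained in E by the
   minimality of E in (Eq, ⊇). *)

From Pilot Require Import Defs.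
From HB Require Import structures.
From mathcomp Require Import all_boot all_order all_algebra.
From mathcomp Require Import boolp classical_sets reals.
From mathcomp Require Import lra.
Set Implicit Arguments. Unset Strict Implicit. Unset Printing Implicit Defensive.
Import Order.TTheory GRing.Theory Num.Theory.
Local Open Scope classical_set_scope.
Local Open Scope ring_scope.

Section UnitInterval.
Variable R : realType.
Implicit Types (S : set R) (b r t : R).

Lemma sup_le_nonneg S b : 0 <= b -> ubound S b -> sup S <= b.
Proof.
move=> b0 Sb; have [->|/set0P S0] := eqVneq S set0; first by rewrite sup0.
exact: ge_sup.
Qed.

Lemma le_sup_bounded S b r : ubound S b -> S r -> r <= sup S.
Proof. by move=> Sb; apply: ub_le_sup; exists b. Qed.

Lemma sup_gt_nonneg S t : 0 <= t -> t < sup S -> exists2 r, S r & t < r.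
Proof.
move=> t0; have [->|/set0P S0] := eqVneq S set0; last exact: sup_gt.
by rewrite sup0 ltNge t0.
Qed.

Lemma sup_in01 S : (forall r, S r -> 0 <= r <= 1) -> 0 <= sup S <= 1.
Proof.
move=> S01; have S1 : ubound S 1 by move=> r /S01 /andP[].
rewrite sup_le_nonneg ?ler01 // andbT.
have [->|/set0P[r Sr]] := eqVneq S set0; first by rewrite sup0.
by have /andP[r0 _] := S01 r Sr; apply: le_trans r0 (le_sup_bounded S1 Sr).
Qed.

Lemma tminus_ge0 r t : 0 <= tminus r t.
Proof. by rewrite /tminus le_max lexx. Qed.

Lemma subr_le_tminus r t : r - t <= tminus r t.
Proof. by rewrite /tminus le_max lexx orbT. Qed.

Lemma tminus_le r t b : 0 <= b -> r - t <= b -> tminus r t <= b.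
Proof. by move=> b0 rtb; rewrite /tminus ge_max b0. Qed.

Lemma tminus_le0 r t : (tminus r t <= 0) = (r <= t).
Proof. by rewrite /tminus ge_max lexx subr_le0. Qed.

Lemma lt_tminus r t b : 0 <= b -> (b < tminus r t) = (b + t < r).
Proof. by move=> b0; rewrite /tminus lt_max ltNge b0 ltrBrDr. Qed.

Lemma tminus_in01 r t : 0 <= r <= 1 -> 0 <= t -> 0 <= tminus r t <= 1.
Proof.
by move=> /andP[r0 r1] t0; rewrite tminus_ge0 tminus_le ?ler01 //; lra.
Qed.

Lemma tplus_in01 r t : 0 <= r -> 0 <= t -> 0 <= tplus r t <= 1.
Proof.
by move=> r0 t0; rewrite /tplus le_min ge_min lexx ler01 orbT andbT addr_ge0.
Qed.

End UnitInterval.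

Lemma finite_gap (R : realType) (A : finType) (g : A -> R) (a : A) :
  (forall b, b != a -> 0 < g b) ->
  exists2 δ : R, 0 < δ <= 1 & forall b, g b < δ -> b = a.
Proof.
move=> g_pos; exists (\big[Order.min/1]_(b | b != a) g b).
  rewrite bigmin_le_id andbT; apply/bigmin_gtP; split=> //; exact: ltr01.
move=> b; apply: contraTeq => ba; rewrite -leNgt; exact: bigmin_le_cond.
Qed.

Section PrefixpointBound.
Variables (R : realType) (T : Type) (F : (T -> T -> R) -> T -> T -> R).
Hypothesis F_mono : forall d1 d2 : T -> T -> R,
  (forall u v, d1 u v <= d2 u v) -> forall u v, F d1 u v <= F d2 u v.
Hypothesis F_in01 : forall d u v, 0 <= F d u v <= 1.

Definition prefix01 (d : T -> T -> R) : Prop :=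
  (forall u v, 0 <= d u v <= 1) /\ (forall u v, F d u v <= d u v).

Let inf_prefix : T -> T -> R :=
  fun u v => inf [set r | exists2 d, prefix01 d & r = d u v].

Let prefix_one : prefix01 (fun _ _ => 1).
Proof.
by split=> u v; [rewrite ler01 lexx | case/andP: (@F_in01 (fun _ _ => 1) u v)].
Qed.

Let inf_prefix_le d : prefix01 d -> forall u v, inf_prefix u v <= d u v.
Proof.
move=> Pd u v; apply: ge_inf; last by exists d.
by exists 0 => r [e [e01 _] ->]; case/andP: (e01 u v).
Qed.

Let le_inf_prefix r u v :
  (forall d, prefix01 d -> r <= d u v) -> r <= inf_prefix u v.
Proof.
move=> rP; apply: lb_le_inf; first by exists 1, (fun _ _ => 1).
by move=> s [d Pd ->]; apply: rP.
Qed.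

Let prefix_inf_prefix : prefix01 inf_prefix.
Proof.
split=> u v.
  rewrite inf_prefix_le // andbT; apply: le_inf_prefix => d [d01 _].
  by case/andP: (d01 u v).
apply: le_inf_prefix => d Pd; apply: le_trans (proj2 Pd u v).
by apply: F_mono; apply: inf_prefix_le.
Qed.

Let inf_prefix_fix : F inf_prefix = inf_prefix.
Proof.
have [_ Finf] := prefix_inf_prefix.
have prefixF : prefix01 (F inf_prefix) by split=> //; apply: F_mono.
apply/funext => u; apply/funext => v; apply/eqP.
by rewrite eq_le Finf inf_prefix_le.
Qed.

Lemma le_prefix_of_le_fixpoints d :
  (forall e, F e = e -> forall u v, d u v <= e u v) ->
  forall e, prefix01 e -> forall u v, d u v <= e u v.
Proof.
move=> d_le e Pe u v; apply: le_trans (inf_prefix_le Pe u v).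
exact: d_le inf_prefix_fix u v.
Qed.

End PrefixpointBound.

Lemma relP_ext (X : Type) (E1 E2 : relP X) :
  (forall Y1 Y2, E1 Y1 Y2 <-> E2 Y1 Y2) -> E1 = E2.
Proof. by move=> E12; apply/funext => Y1; apply/funext => Y2; apply/propext. Qed.

Section DPMetKernel.
Variables (R : realType) (X : Type) (d : set X -> set X -> R).
Hypothesis d_DPMet : is_DPMet d.
Implicit Types Y : set X.

Lemma DPMet_in01 Y1 Y2 : 0 <= d Y1 Y2 <= 1.
Proof. by case: d_DPMet => d01 _; apply: d01. Qed.

Lemma DPMet_ge0 Y1 Y2 : 0 <= d Y1 Y2.
Proof. by case/andP: (DPMet_in01 Y1 Y2). Qed.

Lemma DPMet_refl Y : d Y Y = 0.
Proof. by case: d_DPMet => _ []. Qed.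

Lemma DPMet_triangle Y1 Y2 Y3 : d Y1 Y3 <= d Y1 Y2 + d Y2 Y3.
Proof.
case: d_DPMet => _ [_ tri]; apply: le_trans (tri Y1 Y2 Y3) _.
by rewrite /tplus ge_min lexx.
Qed.

Lemma alpha0_symmE Y1 Y2 : alpha0 (symm d) Y1 Y2 <-> d Y1 Y2 = 0 /\ d Y2 Y1 = 0.
Proof.
rewrite /alpha0 /symm; split=> [m0|[-> ->]]; last by rewrite maxxx.
by split; apply/eqP; rewrite eq_le DPMet_ge0 andbT -m0 le_max lexx ?orbT.
Qed.

Lemma alpha0_symm_equiv : is_equiv (alpha0 (symm d)).
Proof.
split=> [Y|]; first by apply/alpha0_symmE; rewrite DPMet_refl.
split=> [Y1 Y2 /alpha0_symmE [? ?]|Y1 Y2 Y3 /alpha0_symmE [d12 d21]].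
  exact/alpha0_symmE.
case/alpha0_symmE => d23 d32; apply/alpha0_symmE.
have := DPMet_triangle Y1 Y2 Y3; have := DPMet_triangle Y3 Y2 Y1.
by split; apply/eqP; rewrite eq_le DPMet_ge0 andbT; lra.
Qed.

End DPMetKernel.

Section MetricTransitionSystem.
Variables (R : realType) (A : finType) (X : Type).
Variables (trans : X -> A -> X -> Prop) (dA : A -> A -> R).
Hypothesis dA_metric : is_metric01 dA.

Local Notation lift := (@Defs.lift R X).
Local Notation is01 := (@is01 R X).
Local Notation meets := (@Defs.meets X).
Local Notation Circ := (Circ trans dA).
Local Notation lo_T := (lo_T trans dA).
Local Notation beta_T := (beta_T trans dA).
Local Notation beta_t := (beta_t trans).

Implicit Types (f g : X -> R) (S Y Z W : set X) (d : set X -> set X -> R).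

Lemma lift_ub f Y x : is01 f -> Y x -> f x <= lift f Y.
Proof.
move=> f01 Yx; apply: (@le_sup_bounded _ _ 1); last by exists x.
by move=> _ [y [_ ->]]; case/andP: (f01 y).
Qed.

Lemma lift_in01 f Y : is01 f -> 0 <= lift f Y <= 1.
Proof. by move=> f01; apply: sup_in01 => _ [y [_ ->]]. Qed.

Lemma lift_le f Y b : 0 <= b -> (forall x, Y x -> f x <= b) -> lift f Y <= b.
Proof. by move=> b0 fb; apply: sup_le_nonneg => // _ [y [Yy ->]]; apply: fb. Qed.

Lemma lift_gt f Y t : 0 <= t -> t < lift f Y -> exists2 x, Y x & t < f x.
Proof. by move=> t0 /(sup_gt_nonneg t0) [_ [y [Yy ->]] ty]; exists y. Qed.

Lemma le_lift_subset f Y Y' : is01 f -> Y `<=` Y' -> lift f Y <= lift f Y'.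
Proof.
move=> f01 YY'; apply: lift_le; first by case/andP: (lift_in01 Y' f01).
by move=> x /YY'; apply: lift_ub.
Qed.

Lemma dA_in01 a b : 0 <= dA a b <= 1.
Proof. by case: dA_metric => dA01 _; apply: dA01. Qed.

Lemma dA_refl a : dA a a = 0.
Proof. by case: dA_metric => _ [dA0 _]; apply/dA0. Qed.

Lemma dA_gt0 a b : b != a -> 0 < dA b a.
Proof.
case: dA_metric => _ [dA0 _] ba.
rewrite lt_neqAle; case/andP: (dA_in01 b a) => -> _.
by rewrite andbT eq_sym; apply: contra_neq ba => /dA0.
Qed.

Lemma Circ_in01 a f : is01 f -> is01 (Circ a f).
Proof.
move=> f01 x; apply: sup_in01 => _ [b [x' [_ ->]]].
have /andP[? ?] := f01 x'; have /andP[? ?] := dA_in01 b a.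
rewrite le_min ge_min; apply/andP; split; last by apply/orP; right.
by apply/andP; split; lra.
Qed.

Lemma Circ_ub a f x b x' : is01 f -> trans x b x' ->
  Num.min (1 - dA b a) (f x') <= Circ a f x.
Proof.
move=> f01 xbx'; apply: (@le_sup_bounded _ _ 1); last by exists b, x'.
move=> _ [b' [y [_ ->]]].
by rewrite ge_min; case/andP: (f01 y) => _ ->; rewrite orbT.
Qed.

Lemma Circ_gt a f x t : 0 <= t -> t < Circ a f x ->
  exists b x', [/\ trans x b x', t < 1 - dA b a & t < f x'].
Proof.
move=> t0 /(sup_gt_nonneg t0) [_ [b [x' [xbx' ->]]]].
by rewrite lt_min => /andP[? ?]; exists b, x'.
Qed.

Lemma cl_sh_in01 (FF : set (X -> R)) f :
  (forall g, FF g -> is01 g) -> cl_sh FF f -> is01 f.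
Proof.
move=> FF01.
elim=> {f} [f /FF01 //|f c /andP[c0 _] _ f01 x|f c /andP[c0 _] _ f01 x].
  exact: tminus_in01.
by case/andP: (f01 x) => fx0 _; apply: tplus_in01.
Qed.

Lemma lo_T_in01 (FF : set (X -> R)) g :
  (forall f, FF f -> is01 f) -> lo_T FF g -> is01 g.
Proof.
move=> FF01 [[a [f [FFf ->]]]|->]; last by move=> x; rewrite ler01 lexx.
exact/Circ_in01/(cl_sh_in01 FF01).
Qed.

Lemma cl_sh_gamma_T_in01 d f : cl_sh (gamma_T d) f -> is01 f.
Proof. by apply: cl_sh_in01 => g []. Qed.

Lemma lo_T_gamma_T_in01 d g : lo_T (gamma_T d) g -> is01 g.
Proof. by apply: lo_T_in01 => f []. Qed.

Section AlphaT.
Variable FF : set (X -> R).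
Hypothesis FF_in01 : forall f, FF f -> is01 f.

Lemma alpha_T_term_in01 Y1 Y2 f :
  FF f -> 0 <= tminus (lift f Y1) (lift f Y2) <= 1.
Proof.
move=> FFf; apply: tminus_in01; first exact: lift_in01 (FF_in01 FFf).
by case/andP: (lift_in01 Y2 (FF_in01 FFf)).
Qed.

Lemma alpha_T_in01 Y1 Y2 : 0 <= alpha_T FF Y1 Y2 <= 1.
Proof. by apply: sup_in01 => _ [f [FFf ->]]; apply: alpha_T_term_in01. Qed.

Lemma alpha_T_ub f Y1 Y2 :
  FF f -> tminus (lift f Y1) (lift f Y2) <= alpha_T FF Y1 Y2.
Proof.
move=> FFf; apply: (@le_sup_bounded _ _ 1); last by exists f.
by move=> _ [g [FFg ->]]; case/andP: (alpha_T_term_in01 Y1 Y2 FFg).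
Qed.

Lemma alpha_T_refl Y : alpha_T FF Y Y = 0.
Proof.
apply/eqP; rewrite eq_le; case/andP: (alpha_T_in01 Y Y) => -> _; rewrite andbT.
by apply: sup_le_nonneg => // _ [f [_ ->]]; rewrite /tminus subrr maxxx.
Qed.

Lemma alpha_T_triangle Y1 Y2 Y3 :
  alpha_T FF Y1 Y3 <= tplus (alpha_T FF Y1 Y2) (alpha_T FF Y2 Y3).
Proof.
have /andP[d12 _] := alpha_T_in01 Y1 Y2; have /andP[d23 _] := alpha_T_in01 Y2 Y3.
apply: sup_le_nonneg; first by case/andP: (tplus_in01 d12 d23).
move=> _ [f [FFf ->]]; rewrite /tplus le_min; apply/andP; split; last first.
  by case/andP: (alpha_T_term_in01 Y1 Y3 FFf).
have := alpha_T_ub Y1 Y2 FFf; have := alpha_T_ub Y2 Y3 FFf.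
have := subr_le_tminus (lift f Y1) (lift f Y2).
have := subr_le_tminus (lift f Y2) (lift f Y3).
have := tminus_ge0 (lift f Y1) (lift f Y2).
have := tminus_ge0 (lift f Y2) (lift f Y3).
by move=> *; apply: tminus_le; lra.
Qed.

Lemma alpha_T_DPMet : is_DPMet (alpha_T FF).
Proof.
split; first exact: alpha_T_in01.
by split; [apply: alpha_T_refl | apply: alpha_T_triangle].
Qed.

Lemma alpha_T_le_subset Y Y' W : Y `<=` Y' -> alpha_T FF Y W <= alpha_T FF Y' W.
Proof.
move=> YY'; apply: sup_le_nonneg; first by case/andP: (alpha_T_in01 Y' W).
move=> _ [f [FFf ->]]; apply: le_trans (alpha_T_ub Y' W FFf).
rewrite /tminus le_max2 // lerD2r; exact: le_lift_subset (FF_in01 FFf) YY'.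
Qed.

Lemma alpha_T_pointwise Y W :
  alpha_T FF Y W = lift (fun x => alpha_T FF [set x] W) Y.
Proof.
have pt01 : is01 (fun x => alpha_T FF [set x] W) by move=> x; apply: alpha_T_in01.
apply/eqP; rewrite eq_le; apply/andP; split; last first.
  apply: lift_le; first by case/andP: (alpha_T_in01 Y W).
  by move=> x Yx; apply: alpha_T_le_subset => y ->.
have /andP[m0 _] := lift_in01 Y pt01.
apply: sup_le_nonneg => // _ [g [FFg ->]]; rewrite leNgt; apply/negP.
have /andP[gW0 _] := lift_in01 W (FF_in01 FFg).
rewrite (lt_tminus _ _ m0) => /(lift_gt (addr_ge0 m0 gW0)) [x Yx gx].
have := lift_ub pt01 Yx; have := alpha_T_ub [set x] W FFg.
have := subr_le_tminus (lift g [set x]) (lift g W).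
have : g x <= lift g [set x] by apply: lift_ub (FF_in01 FFg) _.
lra.
Qed.

End AlphaT.

Lemma beta_T_DPMet d : is_DPMet (beta_T d).
Proof. by apply: alpha_T_DPMet => g; apply: lo_T_gamma_T_in01. Qed.

Lemma beta_T_in01 d Y1 Y2 : 0 <= beta_T d Y1 Y2 <= 1.
Proof. by case: (beta_T_DPMet d) => d01 _; apply: d01. Qed.

Lemma beta_T_mono d1 d2 : (forall Y1 Y2, d1 Y1 Y2 <= d2 Y1 Y2) ->
  forall Y1 Y2, beta_T d1 Y1 Y2 <= beta_T d2 Y1 Y2.
Proof.
move=> d12 Y1 Y2.
have gamma12 : gamma_T d1 `<=` gamma_T d2.
  by move=> f [f01 f1]; split=> // Z1 Z2; apply: le_trans (f1 Z1 Z2) (d12 Z1 Z2).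
have cl12 f : cl_sh (gamma_T d1) f -> cl_sh (gamma_T d2) f.
  by elim=> {f} [f /gamma12|f c|f c]; constructor.
apply: sup_le_nonneg; first by case/andP: (beta_T_in01 d2 Y1 Y2).
move=> _ [g [lo1g ->]]; apply: alpha_T_ub; first exact: lo_T_gamma_T_in01.
case: lo1g => [[a [f [cl1f ->]]]|->]; last by right.
by left; exists a, f; split=> //; apply: cl12.
Qed.

Lemma lfp_beta_T_le_prefix d e : is_lfp_beta_T trans dA d -> prefix01 beta_T e ->
  forall Y1 Y2, d Y1 Y2 <= e Y1 Y2.
Proof.
move=> [_ [_ d_min]]; apply: (le_prefix_of_le_fixpoints beta_T_mono beta_T_in01).
by move=> e' e'_fix; apply: d_min => //; rewrite -e'_fix; apply: beta_T_DPMet.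
Qed.


Lemma beta_t_mono (E1 E2 : relP X) : (forall Y1 Y2, E1 Y1 Y2 -> E2 Y1 Y2) ->
  forall Y1 Y2, beta_t E1 Y1 Y2 -> beta_t E2 Y1 Y2.
Proof.
move=> E12 Y1 Y2 E1Y S' [[a [S [gS ->]]]|->]; last by apply: E1Y; right.
by apply: E1Y; left; exists a, S; split=> // Z1 Z2 /E12; apply: gS.
Qed.

Lemma beta_t_sym (E : relP X) Y1 Y2 : beta_t E Y1 Y2 -> beta_t E Y2 Y1.
Proof. by move=> EY S' loS'; apply: iff_sym; apply: EY. Qed.

Definition level_sets_in (SS : set (set X)) f : Prop :=
  forall t, 0 <= t -> SS [set x | t < f x].

Definition rel_dist (E : relP X) : set X -> set X -> R :=
  fun Y1 Y2 => if `[< E Y1 Y2 >] then 0 else 1.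

Section Bisimulation.
Variable E : relP X.
Hypothesis E_sym : forall Y1 Y2, E Y1 Y2 -> E Y2 Y1.
Hypothesis E_post : forall Y1 Y2, E Y1 Y2 -> beta_t E Y1 Y2.

Lemma bisim_nonempty Z1 Z2 : E Z1 Z2 -> Z1 !=set0 -> Z2 !=set0.
Proof.
move=> /E_post EZ [x Z1x]; have [+ _] := EZ setT (or_intror erefl).
by case=> [|y [Z2y _]]; [exists x | exists y].
Qed.

Lemma gamma_t_sym S :
  (forall Z1 Z2, E Z1 Z2 -> meets Z1 S -> meets Z2 S) -> gamma_t E S.
Proof. by move=> ES Z1 Z2 EZ; split; apply: ES => //; apply: E_sym. Qed.

Lemma lift_le_of_level_sets f Z1 Z2 : is01 f -> level_sets_in (gamma_t E) f ->
  E Z1 Z2 -> lift f Z1 <= lift f Z2.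
Proof.
move=> f01 fE EZ; rewrite leNgt; apply/negP => lt21.
have /andP[l0 _] := lift_in01 Z2 f01.
have [x Z1x lx] := lift_gt l0 lt21.
have [+ _] := fE _ l0 _ _ EZ; case=> [|y [Z2y /= ly]]; first by exists x.
by have := lift_ub f01 Z2y; lra.
Qed.

Lemma level_sets_of_lift_le f : is01 f ->
  (forall Z1 Z2, E Z1 Z2 -> lift f Z1 <= lift f Z2) ->
  level_sets_in (gamma_t E) f.
Proof.
move=> f01 fE t t0; apply: gamma_t_sym => Z1 Z2 EZ [x [Z1x tx]].
have [y Z2y ty] : exists2 y, Z2 y & t < f y.
  apply: lift_gt => //; apply: lt_le_trans (fE _ _ EZ).
  exact: lt_le_trans tx (lift_ub f01 Z1x).
by exists y.
Qed.

Lemma level_sets_tminus f c : 0 <= c -> level_sets_in (gamma_t E) f ->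
  level_sets_in (gamma_t E) (fun x => tminus (f x) c).
Proof.
move=> c0 fE t t0; have -> : [set x | t < tminus (f x) c] = [set x | t + c < f x].
  by apply/seteqP; split=> x /=; rewrite lt_tminus.
by apply: fE; apply: addr_ge0.
Qed.

Lemma level_sets_tplus f c : is01 f -> level_sets_in (gamma_t E) f ->
  level_sets_in (gamma_t E) (fun x => tplus (f x) c).
Proof.
move=> f01 fE t t0; apply: gamma_t_sym => Z1 Z2 EZ [x [Z1x]].
rewrite /= /tplus lt_min => /andP[tx t1].
have [tc|tc] := leP 0 (t - c).
  have [+ _] := fE _ tc _ _ EZ; case=> [|y [Z2y /= ty]].
    by exists x; split=> //=; lra.
  by exists y; split=> //=; rewrite lt_min t1 andbT; lra.
have [y Z2y] := bisim_nonempty EZ (ex_intro _ x Z1x).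
exists y; split=> //=; rewrite lt_min t1 andbT.
by case/andP: (f01 y) => *; lra.
Qed.

(* The level set of [Circ a f] at [t] is a union of sets [Diamond b S], with
   [S] a level set of [f]; these lie in [gamma_t E] as [E] is a post-fixpoint. *)
Lemma level_sets_Circ a f : is01 f -> level_sets_in (gamma_t E) f ->
  level_sets_in (gamma_t E) (Circ a f).
Proof.
move=> f01 fE t t0; apply: gamma_t_sym => Z1 Z2 EZ [x [Z1x]].
move=> /(Circ_gt t0) [b [x' [xbx' tb tx']]].
have loD : lo_t trans (gamma_t E) (Diamond trans b [set y | t < f y]).
  by left; exists b, [set y | t < f y]; split=> //; apply: fE.
have [+ _] := E_post EZ loD.
case=> [|y [Z2y [y' [yby' ty']]]]; first by exists x; split=> //; exists x'.
exists y; split=> //=; apply: lt_le_trans (Circ_ub a f01 yby').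
by rewrite lt_min tb.
Qed.

Lemma level_sets_one : level_sets_in (gamma_t E) (fun _ => 1).
Proof.
move=> t t0; apply: gamma_t_sym => Z1 Z2 EZ [x [Z1x t1]].
by have [y Z2y] := bisim_nonempty EZ (ex_intro _ x Z1x); exists y.
Qed.

Lemma level_sets_cl_sh f :
  cl_sh (gamma_T (rel_dist E)) f -> level_sets_in (gamma_t E) f.
Proof.
elim=> {f} [f [f01 fE]|f c /andP[c0 _] clf|f c _ clf].
- apply: level_sets_of_lift_le => // Z1 Z2 EZ; rewrite -tminus_le0.
  by have := fE Z1 Z2; rewrite /rel_dist asboolT.
- by move=> fE; apply: level_sets_tminus.
- by move=> fE; apply: level_sets_tplus => //; exact: cl_sh_gamma_T_in01 clf.
Qed.

Lemma rel_dist_prefix : prefix01 beta_T (rel_dist E).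
Proof.
split=> Y1 Y2; first by rewrite /rel_dist; case: asboolP; rewrite ?lexx ?ler01.
have /andP[_ beta1] := beta_T_in01 (rel_dist E) Y1 Y2.
rewrite /rel_dist in beta1 *; case: asboolP => EY //.
apply: sup_le_nonneg => // _ [g [lo_g ->]]; rewrite tminus_le0.
apply: lift_le_of_level_sets EY; first exact: lo_T_gamma_T_in01 lo_g.
case: lo_g => [[a [f [clf ->]]]|->]; last exact: level_sets_one.
apply: level_sets_Circ; last exact: level_sets_cl_sh.
exact: cl_sh_gamma_T_in01 clf.
Qed.

Lemma bisim_sub_lfp_kernel d Y1 Y2 : is_lfp_beta_T trans dA d ->
  E Y1 Y2 -> alpha0 (symm d) Y1 Y2.
Proof.
move=> d_lfp EY; have [d_DPMet _] := d_lfp.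
have d_le := lfp_beta_T_le_prefix d_lfp rel_dist_prefix.
have d_E Z1 Z2 : E Z1 Z2 -> d Z1 Z2 = 0.
  move=> EZ; apply/eqP; rewrite eq_le DPMet_ge0 // andbT.
  by have := d_le Z1 Z2; rewrite /rel_dist (asboolT EZ).
apply/(alpha0_symmE d_DPMet).
by split; apply: d_E => //; apply: E_sym.
Qed.

End Bisimulation.

Section Kernel.
Variable d : set X -> set X -> R.
Hypothesis d_DPMet : is_DPMet d.
Hypothesis d_fix : beta_T d = d.

Local Notation K := (alpha0 (symm d)).

Let d_ge0 := DPMet_ge0 d_DPMet.
Let d_refl := DPMet_refl d_DPMet.

Lemma d_fixE Y1 Y2 : d Y1 Y2 = alpha_T (lo_T (gamma_T d)) Y1 Y2.
Proof. by rewrite -{1}d_fix. Qed.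

Definition dist_to W : X -> R := fun x => d [set x] W.

Lemma d_pointwise Y W : d Y W = lift (dist_to W) Y.
Proof.
rewrite d_fixE (alpha_T_pointwise (@lo_T_gamma_T_in01 d)); congr (lift _ Y).
by apply/funext => x; rewrite -d_fixE.
Qed.

Lemma d_le_subset Y Y' W : Y `<=` Y' -> d Y W <= d Y' W.
Proof. by rewrite !d_fixE; apply/alpha_T_le_subset/lo_T_gamma_T_in01. Qed.

Lemma lift_le_of_dist0 g Y1 Y2 : d Y1 Y2 = 0 -> lo_T (gamma_T d) g ->
  lift g Y1 <= lift g Y2.
Proof.
move=> d0 lo_g; rewrite -tminus_le0 -d0 d_fixE.
by apply: alpha_T_ub lo_g; apply: lo_T_gamma_T_in01.
Qed.

Lemma dist_to_gamma_T W : gamma_T d (dist_to W).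
Proof.
split=> [x|Z1 Z2]; first exact: DPMet_in01.
rewrite -!d_pointwise; apply: tminus_le (d_ge0 _ _) _.
by have := DPMet_triangle d_DPMet Z1 Z2 W; lra.
Qed.

Lemma dist_to_eq0 W x : W x -> dist_to W x = 0.
Proof.
move=> Wx; apply/eqP; rewrite eq_le d_ge0 andbT -(d_refl W).
by apply: d_le_subset => y ->.
Qed.

(* If [d({x}, ~` S)] vanished, [x |` ~` S] and [~` S] would be [K]-related,
   although only the former meets [S]. *)
Lemma dist_to_compl_gt0 S x : gamma_t K S -> S x -> 0 < dist_to (~` S) x.
Proof.
move=> SK Sx; rewrite lt_neqAle d_ge0 andbT eq_sym; apply/eqP => dx0.
have KxS : K ([set x] `|` ~` S) (~` S).
  apply/(alpha0_symmE d_DPMet).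
  split; apply/eqP; rewrite eq_le d_ge0 andbT; last first.
    by rewrite -(d_refl ([set x] `|` ~` S)); apply: d_le_subset => y; right.
  rewrite d_pointwise; apply: lift_le => // y [->|nSy]; first by rewrite dx0.
  by rewrite dist_to_eq0.
have [+ _] := SK _ _ KxS; case=> [|y [nSy Sy]]; last exact: nSy Sy.
by exists x; split=> //; left.
Qed.

Section Probe.
Variables (a : A) (S : set X) (δ : R).
Hypothesis δ_in01 : 0 < δ <= 1.
Hypothesis δ_gap : forall b, dA b a < δ -> b = a.

(* Only [a]-transitions can push [probe] above [1 - δ], by the choice of [δ]. *)
Definition probe : X -> R := Circ a (fun x => tplus (dist_to (~` S) x) (1 - δ)).

Lemma lo_T_probe : lo_T (gamma_T d) probe.
Proof.
left; exists a, (fun x => tplus (dist_to (~` S) x) (1 - δ)); split=> //.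
have /andP[δ0 δ1] := δ_in01.
by apply: cl_sh_plus; [apply/andP; split; lra | apply/cl_sh_in/dist_to_gamma_T].
Qed.

Lemma probe_gt_Diamond x : gamma_t K S -> Diamond trans a S x -> 1 - δ < probe x.
Proof.
move=> SK [x' [xax' Sx']]; have /andP[δ0 δ1] := δ_in01.
have shift01 : is01 (fun x => tplus (dist_to (~` S) x) (1 - δ)).
  by move=> y; apply: tplus_in01; [apply: d_ge0 | lra].
apply: lt_le_trans (Circ_ub a shift01 xax').
have := dist_to_compl_gt0 SK Sx'.
by rewrite dA_refl subr0 /tplus !lt_min => ?; apply/and3P; split; lra.
Qed.

Lemma Diamond_of_probe_gt y : 1 - δ < probe y -> Diamond trans a S y.
Proof.
have c0 : 0 <= 1 - δ by rewrite subr_ge0; case/andP: δ_in01.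
move=> /(Circ_gt c0) [b [y' [yby' tb ty']]].
have ba : b = a by apply: δ_gap; lra.
exists y'; split; first by rewrite -ba.
apply: contrapT => nSy'; move: ty'.
by rewrite /tplus dist_to_eq0 // add0r lt_min ltxx.
Qed.

End Probe.

Lemma dist0_meets_Diamond Y1 Y2 a S : d Y1 Y2 = 0 -> gamma_t K S ->
  meets Y1 (Diamond trans a S) -> meets Y2 (Diamond trans a S).
Proof.
move=> d0 SK [x [Y1x Dx]].
have [δ δ_in01 δ_gap] := @finite_gap _ _ (dA^~ a) a (@dA_gt0 a).
have lo_p := lo_T_probe a S δ_in01.
have c0 : 0 <= 1 - δ by rewrite subr_ge0; case/andP: δ_in01.
have : 1 - δ < lift (probe a S δ) Y2.
  apply: lt_le_trans (lift_le_of_dist0 d0 lo_p).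
  apply: lt_le_trans (probe_gt_Diamond δ_in01 SK Dx) _.
  exact: lift_ub (lo_T_gamma_T_in01 lo_p) Y1x.
by case/(lift_gt c0) => y Y2y /(Diamond_of_probe_gt δ_in01 δ_gap) Dy; exists y.
Qed.

Lemma dist0_meets_setT Y1 Y2 : d Y1 Y2 = 0 -> meets Y1 setT -> meets Y2 setT.
Proof.
move=> d0 [x [Y1x _]].
have lo1 : lo_T (gamma_T d) (fun _ => 1) by right.
have [|y Y2y _] := @lift_gt (fun _ => 1) Y2 0 (lexx 0); last by exists y.
apply: lt_le_trans (lift_le_of_dist0 d0 lo1).
exact: lt_le_trans ltr01 (lift_ub (lo_T_gamma_T_in01 lo1) Y1x).
Qed.

Lemma kernel_post Y1 Y2 : K Y1 Y2 -> beta_t K Y1 Y2.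
Proof.
case/(alpha0_symmE d_DPMet) => d12 d21 S' [[a [S [SK ->]]]|->].
  by split; apply: dist0_meets_Diamond.
by split; apply: dist0_meets_setT.
Qed.

End Kernel.

End MetricTransitionSystem.

Theorem mainTheorem17 (R : realType) (A : finType) (X : Type)
    (trans : X -> A -> X -> Prop) (dA : A -> A -> R) :
  is_metric01 dA ->
  forall (E : relP X) (d : set X -> set X -> R),
    is_lfp_beta_t trans E ->
    is_lfp_beta_T trans dA d ->
    E = alpha0 (symm d).
Proof.
move=> dA_metric E d [E_equiv [E_fix E_max]] d_lfp.
have [d_DPMet [d_fix _]] := d_lfp; have [_ [E_sym _]] := E_equiv.
have E_post Y1 Y2 : E Y1 Y2 -> beta_t trans E Y1 Y2 by rewrite E_fix.
have K_post := kernel_post dA_metric d_DPMet d_fix.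
have K_fix : beta_t trans (alpha0 (symm d)) = alpha0 (symm d).
  apply: relP_ext => Y1 Y2; split; last exact: K_post.
  apply: (bisim_sub_lfp_kernel dA_metric) d_lfp; first exact: beta_t_sym.
  exact: beta_t_mono K_post.
apply: relP_ext => Y1 Y2; split=> [EY|KY].
  exact (bisim_sub_lfp_kernel dA_metric E_sym E_post d_lfp EY).
exact (E_max _ (alpha0_symm_equiv d_DPMet) K_fix Y1 Y2 KY).
Qed.
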